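(* Let $n\ge2$ and let $P=(p_{ij})$ be an $n\times n$ checkerboard copula. Then there exist indices $i<i'$ and $j<j'$ in $\{1,\dots,n\}$ such that at least one of the following holds: (i) $p_{ij}\ge n^{-2}$ and $p_{i'j'}\ge n^{-2}$; (ii) $p_{i'j}\ge n^{-2}$ and $p_{ij'}\ge n^{-2}$.
   Context: An $n\times n$ checkerboard copula is a real $n\times n$ matrix with nonnegative entries whose row and column sums all equal $\frac1n$. *)

From mathcomp Require Import all_boot all_order all_algebra.
Set Implicit Arguments. Unset Strict Implicit. Unset Printing Implicit Defensive.
Import Order.TTheory GRing.Theory Num.Theory.
Local Open Scope ring_scope.

Definition checkerboard_copula (R : realFieldType) (n : nat) (P : 'M[R]_n) : Prop :=
  (forall i j, 0 <= P i j) /\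
  (forall i, \sum_(j < n) P i j = (n%:R)^-1) /\
  (forall j, \sum_(i < n) P i j = (n%:R)^-1).

From mathcomp Require Import all_boot all_order all_algebra.
Set Implicit Arguments. Unset Strict Implicit. Unset Printing Implicit Defensive.
Import Order.TTheory GRing.Theory Num.Theory.
Local Open Scope ring_scope.

(* Every row and every column of P sums to 1/n = n * (1/n^2), so each of them
   contains an entry of size at least 1/n^2.  Two such entries lying in
   distinct rows and distinct columns already form the required pair, and they
   exist: take the large entries of the first two rows; if they share a column,
   a large entry of any other column completes one of them to such a pair. *)

Lemma exists_ge_mean (R : realDomainType) (I : finType) (F : I -> R) (c : R) :
  (0 < #|I|)%N -> c *+ #|I| <= \sum_i F i -> exists i, c <= F i.
Proof.
move=> I_gt0 le_sum; case: (pickP (fun i => c <= F i)) => [i Fi | small].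
  by exists i.
have nonempty : has predT (index_enum I).
  by have [i0 _] := card_gt0P I_gt0; apply/hasP; exists i0; rewrite ?mem_index_enum.
have : \sum_i F i < \sum_(i : I) c by apply: ltr_sum => // i _; rewrite ltNge small.
by rewrite sumr_const ltNge le_sum.
Qed.

Lemma mulrn_invXn2 (R : numFieldType) (n : nat) :
  (0 < n)%N -> ((n%:R : R) ^+ 2)^-1 *+ n = n%:R^-1.
Proof.
move=> n_gt0; have n_neq0 : (n%:R : R) != 0 by rewrite pnatr_eq0 -lt0n.
by rewrite -(mulr_natl ((n%:R ^+ 2)^-1) n) expr2 invfM mulrA mulfV // mul1r.
Qed.

Lemma checkerboard_copula_tr (R : realFieldType) (n : nat) (P : 'M[R]_n) :
  checkerboard_copula P -> checkerboard_copula P^T.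
Proof.
move=> [P_ge0 [Prow Pcol]]; split; last split.
- by move=> i j; rewrite mxE.
- by move=> i; under eq_bigr do rewrite mxE; exact: Pcol.
- by move=> j; under eq_bigr do rewrite mxE; exact: Prow.
Qed.

Lemma checkerboard_copula_row_ge (R : realFieldType) (n : nat) (P : 'M[R]_n)
    (i : 'I_n) :
  checkerboard_copula P -> exists j, ((n%:R) ^+ 2)^-1 <= P i j.
Proof.
have n_gt0 : (0 < n)%N := leq_ltn_trans (leq0n i) (ltn_ord i).
move=> [_ [Prow _]]; apply: exists_ge_mean; rewrite card_ord //.
by rewrite Prow mulrn_invXn2.
Qed.

Lemma checkerboard_copula_col_ge (R : realFieldType) (n : nat) (P : 'M[R]_n)
    (j : 'I_n) :
  checkerboard_copula P -> exists i, ((n%:R) ^+ 2)^-1 <= P i j.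
Proof.
move=> /checkerboard_copula_tr/(checkerboard_copula_row_ge j) [i].
by rewrite mxE; exists i.
Qed.

Lemma ordered_pair_of_distinct (m n : nat) (Q : 'I_m -> 'I_n -> Prop)
    (a a' : 'I_m) (b b' : 'I_n) :
  a != a' -> b != b' -> Q a b -> Q a' b' ->
  exists (i i' : 'I_m) (j j' : 'I_n),
    [/\ (i < i')%N, (j < j')%N & (Q i j /\ Q i' j') \/ (Q i' j /\ Q i j')].
Proof.
move=> /negPf neq_a /negPf neq_b Qab Qab'.
case: (ltngtP a a') => [lt_a | lt_a | /val_inj eq_a]; last by rewrite eq_a eqxx in neq_a.
- case: (ltngtP b b') => [lt_b | lt_b | /val_inj eq_b]; last by rewrite eq_b eqxx in neq_b.
  + by exists a, a', b, b'; split => //; left.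
  + by exists a, a', b', b; split => //; right.
- case: (ltngtP b b') => [lt_b | lt_b | /val_inj eq_b]; last by rewrite eq_b eqxx in neq_b.
  + by exists a', a, b, b'; split => //; right.
  + by exists a', a, b', b; split => //; left.
Qed.

Lemma distinct_pair_of_row_col_covers (m n : nat) (Q : 'I_m.+2 -> 'I_n.+2 -> Prop) :
  (forall i, exists j, Q i j) -> (forall j, exists i, Q i j) ->
  exists (a a' : 'I_m.+2) (b b' : 'I_n.+2), [/\ a != a', b != b', Q a b & Q a' b'].
Proof.
move=> row_cover col_cover.
pose i0 : 'I_m.+2 := ord0; pose i1 := lift i0 ord0.
have [j0 Q0] := row_cover i0; have [j1 Q1] := row_cover i1.
have neq_i01 : i0 != i1 := neq_lift i0 ord0.
case: (eqVneq j0 j1) Q1 => [<- | neq_j] Q1; last by exists i0, i1, j0, j1.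
pose k := lift j0 ord0; have neq_k : k != j0 by rewrite eq_sym neq_lift.
have [r Qr] := col_cover k.
case: (eqVneq r i0) Qr => [-> | neq_r] Qr; first by exists i0, i1, k, j0.
by exists r, i0, k, j0.
Qed.

Theorem lemma5 (R : realFieldType) (n : nat) (P : 'M[R]_n) :
  (2 <= n)%N -> checkerboard_copula P ->
  exists (i i' j j' : 'I_n),
    [/\ (i < i')%N, (j < j')%N &
      ((((n%:R) ^+ 2)^-1 <= P i j /\ ((n%:R) ^+ 2)^-1 <= P i' j') \/
       (((n%:R) ^+ 2)^-1 <= P i' j /\ ((n%:R) ^+ 2)^-1 <= P i j'))].
Proof.
case: n P => [|[|n]] // P _ copulaP.
have [a [a' [b [b' [neq_a neq_b Qab Qab']]]]] :=
  distinct_pair_of_row_col_covers (fun i => checkerboard_copula_row_ge i copulaP)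
    (fun j => checkerboard_copula_col_ge j copulaP).
exact: (ordered_pair_of_distinct neq_a neq_b Qab Qab').
Qed.
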